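(* Let $V=(v_1,\dots,v_D)$ be a non-increasing sequence of positive integers. If $\mathcal T$ is a $V$-regular rooted tree with depth $k$, then $\mathcal T$ is isomorphic to $\mathcal T_V^k$.
   Context: A rooted tree is a directed tree whose edges all point toward the root; its depth is the maximal distance of a vertex to the root. A vertex $c$ is a $k$-distant predecessor of $b$ if $c$ is at distance $k$ from $b$, i.e. there is a directed path of length $k$ from $c$ to $b$. With $v_i=v_D$ for all $i\ge D$, a directed graph is $V$-regular if for every positive integer $k$ and every vertex, the number of $k$-distant predecessors of that vertex is either $0$ or $v_1\cdots v_k$. Put $v_i=v_D$ for $i\ge D+1$; $\bullet$ is the one-vertex tree; for rooted trees $\mathcal T_1,\dots,\mathcal T_s$, $\langle\mathcal T_1\oplus\dots\oplus\mathcal T_s\rangle$ is the rooted tree whose root's children are roots of copies of $\mathcal T_1,\dots,\mathcal T_s$, and $k\times\mathcal T$ denotes $k$ disjoint copies of $\mathcal T$. Define $\mathcal T_V^0=\bullet$ and $\mathcal T_V^k=\big\langle v_k\times\mathcal T_V^{k-1}\oplus\bigoplus_{i=1}^{k-1}(v_i-v_{i+1})\times\mathcal T_V^{i-1}\big\rangle$ for $k\ge1$. *)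

From mathcomp Require Import all_boot.
Set Implicit Arguments. Unset Strict Implicit. Unset Printing Implicit Defensive.

Fixpoint dpath (T : finType) (e : rel T) (k : nat) (c b : T) : bool :=
  match k with
  | 0 => c == b
  | k'.+1 => [exists y, e c y && dpath e k' y b]
  end.

Definition kpreds (T : finType) (e : rel T) (k : nat) (b : T) : {set T} :=
  [set c | dpath e k c b].

(* A rooted tree with root r, all edges pointing toward the root:
   the root has no out-edge, every other vertex has exactly one out-edge
   (to its parent), and every vertex has a directed path to the root. *)
Definition rooted_tree (T : finType) (e : rel T) (r : T) : Prop :=
  [/\ forall y, ~~ e r y,
      forall x, x != r -> exists! y, e x y
    & forall x, connect e x r].

Definition depth_is (T : finType) (e : rel T) (r : T) (k : nat) : Prop :=
  (exists c, dpath e k c r) /\ (forall c j, dpath e j c r -> j <= k).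

(* ---------- The sequence V = (v_1,...,v_D), with v_i = v_D for i >= D ---------- *)
Definition vv (V : seq nat) (i : nat) : nat := nth (last 0 V) V i.-1.

Definition nonincr_pos_seq (V : seq nat) : Prop :=
  [/\ V != [::], all (fun x => 0 < x) V & sorted geq V].

Definition V_regular (V : seq nat) (T : finType) (e : rel T) : Prop :=
  forall k, 0 < k -> forall b : T,
    #|kpreds e k b| = 0 \/ #|kpreds e k b| = \prod_(1 <= i < k.+1) vv V i.

Inductive rtree := RNode of seq rtree.
Definition leaf := RNode [::].

(* vertices of an rtree, as addresses (paths of child indices from the root) *)
Fixpoint addrs (t : rtree) : seq (seq nat) :=
  match t with
  | RNode ts =>
      [::] :: (fix F (i : nat) (ts : seq rtree) : seq (seq nat) :=
                 match ts with
                 | [::] => [::]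
                 | t' :: ts' => map (cons i) (addrs t') ++ F i.+1 ts'
                 end) 0 ts
  end.

Definition rvert (t : rtree) : finType := seq_sub (addrs t).

(* edge from a vertex to its parent (edges point toward the root [::]) *)
Definition redge (t : rtree) : rel (rvert t) :=
  fun a b => (val a != [::]) && (val b == take (size (val a)).-1 (val a)).

(* T_V^0, ..., T_V^k; the children of the root of T_V^k are
   v_k copies of T_V^(k-1) and (v_i - v_(i+1)) copies of T_V^(i-1), 1 <= i <= k-1 *)
Definition TV_children (V : seq nat) (k : nat) (s : seq rtree) : seq rtree :=
  nseq (vv V k) (nth leaf s k.-1) ++
  flatten [seq nseq (vv V i - vv V i.+1) (nth leaf s i.-1) | i <- iota 1 k.-1].

Fixpoint TVs (V : seq nat) (k : nat) : seq rtree :=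
  match k with
  | 0 => [:: leaf]
  | k'.+1 => rcons (TVs V k') (RNode (TV_children V k'.+1 (TVs V k')))
  end.

Definition TV (V : seq nat) (k : nat) : rtree := nth leaf (TVs V k) k.

Definition rtree_iso (T : finType) (e : rel T) (r : T) (t : rtree) : Prop :=
  exists f : T -> rvert t,
    [/\ bijective f, val (f r) = [::] & forall x y, e x y = redge (f x) (f y)].

From mathcomp Require Import all_boot zify.
Set Implicit Arguments. Unset Strict Implicit. Unset Printing Implicit Defensive.

(* Write h(x) for the height of the subtree hanging at x.  V-regularity gives
   #{predecessors of x at distance j} = [j <= h(x)] * v_1 ... v_j, and since every
   predecessor of x at distance j+1 lies at distance j from exactly one child of x,
   the number of children y of x with h(y) >= j is [j < h(x)] * v_(j+1).  Hence the
   heights of the children of x form the same multiset as the heights of the subtrees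
   T_V^(i-1) hanging at the root of T_V^(h(x)).  Listing the children of every vertex
   in that order, the address of a vertex (the child positions along its path from
   the root) is an isomorphism onto T_V^(h(root)) = T_V^k. *)

Lemma perm_map_lift (T1 T2 : eqType) (f : T1 -> T2) s t :
  perm_eq (map f s) t -> exists2 s', perm_eq s' s & map f s' = t.
Proof.
case: s => [|x0 s0]; first by rewrite perm_sym => /perm_nilP ->; exists [::].
move: (x0 :: s0) => s; rewrite perm_sym => /(perm_iotaP (f x0))[Is Is_perm ->].
exists (map (nth x0 s) Is).
  by rewrite -[s in perm_eq _ s](mkseq_nth x0) perm_map // -(size_map f).
rewrite -map_comp; apply/eq_in_map => i; rewrite (perm_mem Is_perm) mem_iota.
by move=> /andP[_ lt_is]; rewrite (nth_map x0) // -(size_map f).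
Qed.

Lemma count_leq_split (s : seq nat) g :
  count (leq g) s = count (pred1 g) s + count (leq g.+1) s.
Proof. by elim: s => //= t s ->; case: (ltngtP g t) => [||->] /=; lia. Qed.

Lemma dpathD (T : finType) (e : rel T) i j c b :
  dpath e (i + j) c b = [exists z, dpath e i c z && dpath e j z b].
Proof.
elim: i c => [|i IH] c /=.
  by apply/idP/existsP => [p|[z /andP[/eqP -> //]]]; exists c; rewrite eqxx.
apply/existsP/existsP => [[y /andP[ecy]]|[z /andP[/existsP[y /andP[ecy p1]] p2]]].
  rewrite IH => /existsP[z /andP[p1 p2]]; exists z; rewrite p2 andbT.
  by apply/existsP; exists y; rewrite ecy.
by exists y; rewrite ecy IH; apply/existsP; exists z; rewrite p1.
Qed.

Lemma dpath1 (T : finType) (e : rel T) c b : dpath e 1 c b = e c b.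
Proof.
by apply/existsP/idP => [[y /andP[ecy /eqP <-]]|ecb] //; exists b; rewrite ecb eqxx.
Qed.

Lemma dpathSr (T : finType) (e : rel T) j c b :
  dpath e j.+1 c b = [exists y, dpath e j c y && e y b].
Proof. by rewrite -addn1 dpathD; apply: eq_existsb => y; rewrite dpath1. Qed.

Lemma connect_dpath (T : finType) (e : rel T) c b :
  connect e c b -> exists j, dpath e j c b.
Proof.
move/connectP=> [p]; elim: p c => [|z p IH] c /=.
  by move=> _ ->; exists 0; rewrite /= eqxx.
move=> /andP[ecz pz] b_last; have [j pj] := IH _ pz b_last.
by exists j.+1; apply/existsP; exists z; rewrite ecz.
Qed.

Fixpoint addrs_from (i : nat) (ts : seq rtree) : seq (seq nat) :=
  if ts is t :: ts' then map (cons i) (addrs t) ++ addrs_from i.+1 ts' else [::].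

Lemma addrs_node ts : addrs (RNode ts) = [::] :: addrs_from 0 ts.
Proof. by []. Qed.

Lemma nil_addrs t : [::] \in addrs t.
Proof. by case: t => ts; rewrite addrs_node mem_head. Qed.

Lemma mem_addrs_from m ts i a :
  (i :: a \in addrs_from m ts) =
  (m <= i < m + size ts) && (a \in addrs (nth leaf ts (i - m))).
Proof.
elim: ts m => [|t ts IH] m /=; first by rewrite addn0; case: leqP => //; lia.
rewrite mem_cat IH; case: (ltngtP i m) => im /=.
- by rewrite orbF; apply/negbTE/mapP => -[b _ [ib _]]; lia.
- rewrite addSnnS (_ : i - m = (i - m.+1).+1); last by lia.
  by rewrite (_ : (i :: a \in _) = false) //; apply/negbTE/mapP => -[b _ [ib _]]; lia.
- by rewrite im subnn orbF addnS ltnS leq_addr mem_map // => b c [].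
Qed.

Lemma mem_addrs_cons ts i a :
  (i :: a \in addrs (RNode ts)) = (i < size ts) && (a \in addrs (nth leaf ts i)).
Proof. by rewrite addrs_node in_cons /= mem_addrs_from subn0. Qed.

Lemma size_TVs V n : size (TVs V n) = n.+1.
Proof. by elim: n => //= n IH; rewrite size_rcons IH. Qed.

Lemma nth_TVs V n i : i <= n -> nth leaf (TVs V n) i = TV V i.
Proof.
elim: n => [|n IH]; first by rewrite leqn0 => /eqP ->.
rewrite leq_eqVlt => /orP[/eqP -> //|lt_in].
by rewrite /= nth_rcons size_TVs lt_in IH.
Qed.

Definition TV_heights V H : seq nat :=
  if H is 0 then [::] else
  nseq (vv V H) H.-1 ++ flatten [seq nseq (vv V i - vv V i.+1) i.-1 | i <- iota 1 H.-1].

Lemma TV_node V H : TV V H = RNode (map (TV V) (TV_heights V H)).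
Proof.
case: H => [//|H].
rewrite /TV /= nth_rcons size_TVs ltnn eqxx /TV_children /=.
rewrite map_cat map_nseq nth_TVs // map_flatten -map_comp.
congr (RNode (nseq _ _ ++ flatten _)); apply/eq_in_map => i.
by rewrite mem_iota => /andP[i_gt0 lt_iH] /=; rewrite map_nseq nth_TVs //; lia.
Qed.

Lemma count_flatten_nseq_iota (c : nat -> nat) g n :
  count (pred1 g) (flatten [seq nseq (c i) i.-1 | i <- iota 1 n]) = (g < n) * c g.+1.
Proof.
elim: n => [//|n IH].
rewrite -[n.+1]addn1 iotaD map_cat flatten_cat count_cat IH /= cats0 count_nseq /=.
by rewrite add0n add1n addn1; case: (ltngtP n g) => [||->]; lia.
Qed.

Lemma count_TV_heights V H g :
  count (pred1 g) (TV_heights V H) = (g < H) * vv V g.+1 - (g.+1 < H) * vv V g.+2.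
Proof.
case: H => [//|H]; rewrite /TV_heights count_cat count_nseq count_flatten_nseq_iota /=.
by rewrite !ltnS; case: (ltngtP H g) => [||->]; lia.
Qed.

Lemma vv_gt0 V : nonincr_pos_seq V -> forall i, 0 < vv V i.
Proof.
case=> V_neq0 V_pos _ i; apply: (allP V_pos); rewrite /vv.
case: (ltnP i.-1 (size V)) => i_lt; first exact: mem_nth.
by rewrite nth_default //; case: V V_neq0 {V_pos i_lt} => // x s _; exact: mem_last.
Qed.

Section RootedTree.

Variables (T : finType) (e : rel T) (r : T).
Hypothesis tree : rooted_tree e r.

Definition parent x := odflt x [pick y | e x y].

Lemma root_edgeF y : e r y = false.
Proof. by case: tree => root_out _ _; apply/negbTE. Qed.

Lemma edge_nonroot x y : e x y -> x != r.
Proof. by apply: contraTneq => ->; rewrite root_edgeF. Qed.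

Lemma parent_edge x : x != r -> e x (parent x).
Proof.
case: tree => _ out1 _ /out1[y [exy _]]; rewrite /parent.
by case: pickP => [z -> //|/(_ y)]; rewrite exy.
Qed.

Lemma edge_parent x y : e x y -> y = parent x.
Proof.
move=> exy; have xr := edge_nonroot exy.
case: tree => _ out1 _; have [z [_ z_uniq]] := out1 x xr.
by rewrite -(z_uniq _ exy) -(z_uniq _ (parent_edge xr)).
Qed.

Lemma edge_parentE x y : e x y = (x != r) && (y == parent x).
Proof.
apply/idP/andP => [exy|[xr /eqP ->]]; last exact: parent_edge.
by rewrite (edge_nonroot exy) (edge_parent exy).
Qed.

Lemma dpathS j c b : dpath e j.+1 c b = (c != r) && dpath e j (parent c) b.
Proof.
apply/existsP/andP => [[y /andP[ecy p]]|[cr p]].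
  by rewrite (edge_nonroot ecy) -(edge_parent ecy).
by exists (parent c); rewrite parent_edge.
Qed.

Lemma dpath_iter j c b : dpath e j c b -> b = iter j parent c.
Proof.
elim: j c => [|j IH] c; first by move/eqP.
by rewrite dpathS iterSr => /andP[_ /IH].
Qed.

Lemma dpathSr_iter j c b :
  dpath e j.+1 c b = dpath e j c (iter j parent c) && e (iter j parent c) b.
Proof.
rewrite dpathSr; apply/existsP/andP => [[y /andP[p eyb]]|[p eb]].
  by rewrite -(dpath_iter p) p.
by exists (iter j parent c); rewrite p.
Qed.

Lemma card_kpredsS j b : #|kpreds e j.+1 b| = \sum_(y | e y b) #|kpreds e j y|.
Proof.
rewrite /kpreds -sum1dep_card.
rewrite (partition_big (iter j parent) (fun y => e y b)) => [|c]; last first.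
  by rewrite dpathSr_iter => /andP[].
apply: eq_bigr => y eyb; rewrite -sum1dep_card; apply: eq_bigl => c.
rewrite dpathSr_iter; apply/idP/idP => [/andP[/andP[p _] /eqP <-] //|p].
by rewrite -(dpath_iter p) p eyb eqxx.
Qed.

Lemma dpath_root_uniq i j c : dpath e i c r -> dpath e j c r -> i = j.
Proof.
elim: i j c => [|i IH] [|j] c //.
- by move=> /eqP ->; rewrite dpathS eqxx.
- by rewrite dpathS => /andP[/negbTE cr _] /eqP cE; rewrite cE eqxx in cr.
- by rewrite !dpathS => /andP[_ p1] /andP[_ p2]; rewrite (IH _ _ p1 p2).
Qed.

Lemma dpath_root_exists x : exists j, dpath e j x r.
Proof. by case: tree => _ _ /(_ x) /connect_dpath. Qed.

Definition level x := ex_minn (dpath_root_exists x).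

Lemma dpath_level x j : dpath e j x r = (j == level x).
Proof.
rewrite /level; case: ex_minnP => l pl _.
by apply/idP/eqP => [p|->] //; exact: dpath_root_uniq p pl.
Qed.

Lemma level_root : level r = 0.
Proof. by apply/esym/eqP; rewrite -dpath_level /= eqxx. Qed.

Lemma level_eq0 x : level x = 0 -> x = r.
Proof. by move=> lx; apply/eqP; have := dpath_level x 0; rewrite lx eqxx. Qed.

Lemma levelS x : x != r -> level x = (level (parent x)).+1.
Proof.
by move=> xr; apply/eqP; rewrite eq_sym -dpath_level dpathS xr dpath_level eqxx.
Qed.

Section Height.

Variable k : nat.
Hypothesis depth : depth_is e r k.

Lemma height_exists x : exists j, [exists c, dpath e j c x].
Proof. by exists 0; apply/existsP; exists x; rewrite /= eqxx. Qed.

Lemma height_bounded x j : [exists c, dpath e j c x] -> j <= k.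
Proof.
case/existsP=> c p; case: depth => _ /(_ c (j + level x)) bound.
apply: leq_trans (leq_addr (level x) j) (bound _).
by rewrite dpathD; apply/existsP; exists x; rewrite p dpath_level eqxx.
Qed.

Definition height x := ex_maxn (height_exists x) (@height_bounded x).

Lemma height_max x j c : dpath e j c x -> j <= height x.
Proof.
by move=> p; rewrite /height; case: ex_maxnP => i _; apply; apply/existsP; exists c.
Qed.

Lemma height_reach x j : j <= height x -> exists c, dpath e j c x.
Proof.
rewrite /height; case: ex_maxnP => i /existsP[c p] _ le_ji.
by move: p; rewrite -(subnK le_ji) dpathD => /existsP[z /andP[_ q]]; exists z.
Qed.

Lemma height_root : height r = k.
Proof.
case: depth => [[c p] bound]; apply/eqP; rewrite eqn_leq (height_max p) andbT.
by have [c' p'] := height_reach (leqnn (height r)); exact: bound p'.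
Qed.

Section Regular.

Variable V : seq nat.
Hypothesis vv_pos : forall i, 0 < vv V i.
Hypothesis regular : V_regular V e.

Definition vprod j := \prod_(1 <= i < j.+1) vv V i.

Lemma vprod_gt0 j : 0 < vprod j.
Proof. exact: prodn_gt0. Qed.

Lemma card_kpreds_height x j : #|kpreds e j x| = (j <= height x) * vprod j.
Proof.
case: leqP => [le_jh|lt_hj]; rewrite ?mul1n ?mul0n; last first.
  apply/eqP; rewrite cards_eq0; apply/eqP/setP => c; rewrite !inE.
  by apply/negbTE/negP => /height_max; rewrite leqNgt lt_hj.
have [c p] := height_reach le_jh; case: j {le_jh} p => [|j] p.
  rewrite /vprod big_geq // (_ : kpreds e 0 x = [set x]) ?cards1 //.
  by apply/setP => y; rewrite !inE.
case: (regular (ltn0Sn j) x) => // /eqP; rewrite cards_eq0 => /eqP kp0.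
by have := in_set0 c; rewrite -kp0 inE p.
Qed.

Definition children x := [seq y <- index_enum T | e y x].

Lemma count_children_height_ge x j :
  count (fun y => j <= height y) (children x) = (j < height x) * vv V j.+1.
Proof.
have -> : count (fun y => j <= height y) (children x) = \sum_(y | e y x) (j <= height y).
  rewrite -sum1_count big_filter_cond big_mkcondr.
  by apply: eq_bigr => y _; case: leqP.
have := card_kpredsS j x; rewrite card_kpreds_height.
under eq_bigr do rewrite card_kpreds_height.
rewrite -big_distrl /= => card_eq.
apply/eqP; rewrite -(eqn_pmul2r (vprod_gt0 j)) -card_eq.
by rewrite /vprod big_nat_recr //= [_ * vv V _]mulnC mulnA.
Qed.

Lemma perm_children_heights x :
  perm_eq (map height (children x)) (TV_heights V (height x)).
Proof.
have count_ge j : count (leq j) (map height (children x)) = (j < height x) * vv V j.+1.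
  by rewrite count_map; exact: count_children_height_ge.
apply/allP => g _; apply/eqP; rewrite count_TV_heights -!count_ge.
by rewrite (count_leq_split _ g) addnK.
Qed.

Lemma ordered_children_exists x :
  exists s, perm_eq s (children x) && (map height s == TV_heights V (height x)).
Proof.
have [s s_perm s_heights] := perm_map_lift (perm_children_heights x).
by exists s; rewrite s_perm s_heights eqxx.
Qed.

Definition ordered_children x := xchoose (ordered_children_exists x).

Lemma perm_ordered_children x : perm_eq (ordered_children x) (children x).
Proof. by have /andP[] := xchooseP (ordered_children_exists x). Qed.

Lemma heights_ordered_children x :
  map height (ordered_children x) = TV_heights V (height x).
Proof. by have /andP[_ /eqP] := xchooseP (ordered_children_exists x). Qed.

Lemma mem_ordered_children x y : (y \in ordered_children x) = e y x.
Proof.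
by rewrite (perm_mem (perm_ordered_children x)) mem_filter mem_index_enum andbT.
Qed.

Lemma uniq_ordered_children x : uniq (ordered_children x).
Proof. by rewrite (perm_uniq (perm_ordered_children x)) filter_uniq ?index_enum_uniq. Qed.

Fixpoint walk x (a : seq nat) : option T :=
  if a is i :: a' then obind (walk^~ a') (onth (ordered_children x) i) else Some x.

Lemma walk_rcons x a i :
  walk x (rcons a i) = obind (fun z => onth (ordered_children z) i) (walk x a).
Proof. by elim: a x => [|j a IH] x /=; case: onth. Qed.

Lemma mem_addrs_TV x a : (a \in addrs (TV V (height x))) = walk x a.
Proof.
elim: a x => [|i a IH] x; first by rewrite nil_addrs.
rewrite TV_node -heights_ordered_children -map_comp mem_addrs_cons size_map /=.
case: ltnP => [lt_i|le_i]; last by rewrite onth_default.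
by rewrite onthE (nth_map x) ?size_map //= (nth_map x) // IH.
Qed.

Fixpoint addr n y : seq nat :=
  if n is n'.+1 then rcons (addr n' (parent y)) (index y (ordered_children (parent y)))
  else [::].

Definition address y := addr (level y) y.

Lemma address_root : address r = [::].
Proof. by rewrite /address level_root. Qed.

Lemma address_parent x :
  x != r ->
  address x = rcons (address (parent x)) (index x (ordered_children (parent x))).
Proof. by move=> xr; rewrite /address levelS. Qed.

Lemma walk_address y : walk r (address y) = Some y.
Proof.
suff walk_addr n x : level x = n -> walk r (addr n x) = Some x by exact: walk_addr.
elim: n x => [|n IH] x /= lx; first by rewrite (level_eq0 lx).
have xr : x != r by apply: contra_eq_neq lx => ->; rewrite level_root.
rewrite walk_rcons IH /=; last by move: lx; rewrite levelS // => -[].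
have x_in : x \in ordered_children (parent x) by rewrite mem_ordered_children parent_edge.
by rewrite onthE (nth_map x) ?index_mem // nth_index.
Qed.

Lemma address_walk a y : walk r a = Some y -> address y = a.
Proof.
elim/last_ind: a y => [|a i IH] y; first by case=> <-; exact: address_root.
rewrite walk_rcons; case walk_a: (walk r a) => [z|//] /= zi.
have y_in : y \in ordered_children z by apply/onthP; exists i.
have eyz : e y z by rewrite -mem_ordered_children.
rewrite address_parent ?(edge_nonroot eyz) // -(edge_parent eyz) (IH _ walk_a).
have lt_i : i < size (ordered_children z) by rewrite -onthTE zi.
by rewrite -(onth_nth y y _ _ zi) index_uniq // uniq_ordered_children.
Qed.

Lemma address_inj : injective address.
Proof.
by move=> y1 y2 eq_a; have := walk_address y1; rewrite eq_a walk_address => -[].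
Qed.

Lemma address_in_TV y : address y \in addrs (TV V k).
Proof. by rewrite -height_root mem_addrs_TV walk_address. Qed.

Definition address_vertex y : rvert (TV V k) := SeqSub (address_in_TV y).

Lemma address_vertex_bij : bijective address_vertex.
Proof.
exists (fun a => odflt r (walk r (val a))) => [y|[a a_in]].
  by rewrite /= walk_address.
apply: val_inj => /=; move: (a_in); rewrite -height_root mem_addrs_TV.
by case walk_a: (walk r a) => [y|] //= _; exact: address_walk walk_a.
Qed.

Lemma edge_address x y :
  e x y = (address x != [::]) && (address y == take (size (address x)).-1 (address x)).
Proof.
rewrite edge_parentE; have [->|xr] := eqVneq x r; first by rewrite address_root.
rewrite address_parent // size_rcons -cats1 take_size_cat //.
by rewrite (inj_eq address_inj); case: (address _).
Qed.

End Regular.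

End Height.

End RootedTree.

Theorem lemma3p2 (V : seq nat) (T : finType) (e : rel T) (r : T) (k : nat) :
  nonincr_pos_seq V ->
  rooted_tree e r ->
  V_regular V e ->
  depth_is e r k ->
  rtree_iso e r (TV V k).
Proof.
move=> /vv_gt0 vv_pos tree regular depth.
exists (address_vertex tree depth vv_pos regular); split.
- exact: address_vertex_bij.
- exact: address_root.
- move=> x y; exact: edge_address.
Qed.
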